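(* Let $\mathcal{H}$ be a complex Hilbert space, $A\in\mathcal{B}(\mathcal{H})$ positive and $S\in\mathcal{B}_A(\mathcal{H})$. Then $$d\omega_A^2(S)\le\|S\|_A^4+2\|S\|_A^2-\sqrt{c_A\left(S^{\sharp_A}S\right)c_A\left(SS^{\sharp_A}\right)}.$$
   Context: $\mathcal{B}(\mathcal{H})$ denotes the bounded linear operators on $\mathcal{H}$. For positive $A$, $\langle x,z\rangle_A=\langle Ax,z\rangle$ and $\|z\|_A=\|A^{1/2}z\|$. $\mathcal{B}_A(\mathcal{H})$ is the set of $S\in\mathcal{B}(\mathcal{H})$ for which some $R\in\mathcal{B}(\mathcal{H})$ satisfies $AR=S^*A$; for such $S$, $S^{\sharp_A}=A^{\dagger}S^*A$ with $A^\dagger$ the Moore–Penrose inverse of $A$. For operators $T$ bounded with respect to $\|\cdot\|_A$: $\|T\|_A=\sup_{\|z\|_A=1}\|Tz\|_A$, $c_A(T)=\inf_{\|z\|_A=1}|\langle Tz,z\rangle_A|$ ($A$-Crawford number), and $d\omega_A(T)=\sup_{\|z\|_A=1}(|\langle Tz,z\rangle_A|^2+\|Tz\|_A^4)^{1/2}$. *)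

From HB Require Import structures.
From mathcomp Require Import all_boot all_order all_algebra.
From mathcomp Require Import complex.
From mathcomp Require Import boolp classical_sets reals.
Import Order.TTheory GRing.Theory Num.Theory.

Set Implicit Arguments.
Unset Strict Implicit.
Unset Printing Implicit Defensive.

Local Open Scope ring_scope.
Local Open Scope classical_set_scope.

Section SemiHilbert.
Context {R : realType} {H : lmodType R[i]}.
Variable ip : H -> H -> R[i].

Definition is_inner_product : Prop :=
  [/\ (forall (a : R[i]) (x y z : H), ip (a *: x + y) z = a * ip x z + ip y z),
      (forall x y : H, ip x y = conjc (ip y x)),
      (forall x : H, 0 <= ip x x) &
      (forall x : H, ip x x = 0 -> x = 0)].

Definition hnorm (x : H) : R := Num.sqrt (complex.Re (ip x x)).

Definition is_complete : Prop :=
  forall u : nat -> H,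
    (forall e : R, 0 < e -> exists N : nat, forall m n : nat,
        (N <= m)%N -> (N <= n)%N -> hnorm (u m - u n) < e) ->
    exists l : H, forall e : R, 0 < e -> exists N : nat, forall n : nat,
        (N <= n)%N -> hnorm (u n - l) < e.

Definition is_complex_Hilbert : Prop := is_inner_product /\ is_complete.

Definition bounded_op (T : H -> H) : Prop :=
  (forall (a : R[i]) (x y : H), T (a *: x + y) = a *: T x + T y) /\
  exists M : R, forall x : H, hnorm (T x) <= M * hnorm x.

Definition positive_op (A : H -> H) : Prop :=
  bounded_op A /\ forall x : H, 0 <= ip (A x) x.

Definition is_adjoint (T Tstar : H -> H) : Prop :=
  forall x y : H, ip (T x) y = ip x (Tstar y).

Definition in_BA (A S Sstar : H -> H) : Prop :=
  bounded_op S /\ exists Rop : H -> H, bounded_op Rop /\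
    forall x : H, A (Rop x) = Sstar (A x).

(** Moore--Penrose inverse of A: for y in its domain R(A) + R(A)^perp,
    A^dagger y is the unique x in N(A)^perp with y - A x in R(A)^perp
    (equivalently A x = P_{closure R(A)} y). *)
Definition MP_value (A : H -> H) (y x : H) : Prop :=
  (forall z : H, A z = 0 -> ip x z = 0) /\
  (forall w : H, ip (y - A x) (A w) = 0).

Definition MPinv (A : H -> H) (y : H) : H := xget 0 [set x | MP_value A y x].

Definition A_sharp (A Sstar : H -> H) : H -> H := fun z => MPinv A (Sstar (A z)).

Definition A_ip (A : H -> H) (x z : H) : R[i] := ip (A x) z.
Definition A_norm (A : H -> H) (z : H) : R := Num.sqrt (complex.Re (A_ip A z z)).

Definition A_sphere (A : H -> H) : set H := [set z | A_norm A z = 1].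

Definition A_opnorm (A T : H -> H) : R :=
  sup [set A_norm A (T z) | z in A_sphere A].

Definition A_crawford (A T : H -> H) : R :=
  inf [set Normc.normc (A_ip A (T z) z) | z in A_sphere A].

Definition A_davis_wielandt_radius (A T : H -> H) : R :=
  sup [set Num.sqrt (Normc.normc (A_ip A (T z) z) ^+ 2 + A_norm A (T z) ^+ 4)
      | z in A_sphere A].

End SemiHilbert.

From mathcomp Require Import all_boot all_order all_algebra.
From mathcomp Require Import complex.
From mathcomp Require Import boolp classical_sets reals.
From mathcomp Require Import ring lra.
Import Order.TTheory GRing.Theory Num.Theory.
Local Open Scope complex_scope.
Local Open Scope ring_scope.

(* Write M = ||S||_A.  On the A-unit sphere |<Sz,z>_A| <= ||Sz||_A <= M, whence
   dw_A(S)^2 <= M^4 + M^2.  Since moreover ||S^#x||_A <= M ||x||_A, both S^#S and SS^#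
   are A-bounded by M^2, so both Crawford numbers, and hence their geometric mean,
   are at most M^2: the right-hand side is at least M^4 + M^2.

   The substance is that S is A-bounded at all.  For any R with AR = S^*A the
   operator RS is A-selfadjoint and ||Sx||_A^2 = Re <RSx, x>_A.  An A-selfadjoint
   bounded T satisfies ||T^k x||_A^2 <= ||T^(2k) x||_A ||x||_A; following k = 2^n
   and comparing with ||T^k x||_A <= ||A||^(1/2) ||T||^k ||x|| forces
   ||Tx||_A <= ||T|| ||x||_A.  Finally S^#w is either 0 or a solution x of the
   normal equations for A^dagger (ARw), so that Ax = ARw; either way
   ||S^#w||_A <= ||Rw||_A <= M ||w||_A. *)

Lemma psd_quadratic_discr {R : realFieldType} (a b c : R) :
  (forall s t : R, 0 <= s ^+ 2 * a + 2 * s * t * b + t ^+ 2 * c) -> b ^+ 2 <= a * c.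
Proof.
move=> psd; have := psd c (- b); have := psd b (- a); have := psd 1 (- b).
have := psd 1 0; have := psd 0 1.
have [c_gt0|c_le0] := ltP 0 c; first by nra.
have [a_gt0|a_le0] := ltP 0 a; nra.
Qed.

Lemma bernoulli_ineq {R : realFieldType} (e : R) n :
  0 <= e -> 1 + n%:R * e <= (1 + e) ^+ n.
Proof.
move=> e_ge0; elim: n => [|n IHn]; first by rewrite mul0r addr0 expr0.
have : 1 <= (1 + e) ^+ n by apply: exprn_ege1; lra.
by rewrite exprS -natr1; nra.
Qed.

Lemma exprn_unbounded {R : archiRealFieldType} (r B : R) :
  1 < r -> exists n, B < r ^+ n.
Proof.
move=> r_gt1; have e_gt0 : 0 < r - 1 by rewrite subr_gt0.
have -> : r = 1 + (r - 1) by rewrite addrC subrK.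
move: (r - 1) e_gt0 => e e_gt0; set n := Num.bound `|B / e|.
have Bn : B / e < n%:R := le_lt_trans (ler_norm _) (archi_boundP (normr_ge0 _)).
exists n; apply: lt_le_trans (bernoulli_ineq _ n (ltW e_gt0)).
have : B / e * e < n%:R * e by rewrite ltr_pM2r.
by rewrite divfK ?gt_eqF //; lra.
Qed.

Lemma doubling_growth_le {R : archiRealFieldType} (u : nat -> R) (Q c C : R) :
  0 <= Q -> 0 <= c ->
  (forall k, u k ^+ 2 <= u k.*2 * Q) ->
  (forall k, u k <= C * c ^+ k) ->
  u 1%N <= c * Q.
Proof.
move=> Q_ge0 c_ge0 dbl grow; rewrite leNgt; apply/negP => cQ_lt_u1.
have u1_gt0 : 0 < u 1%N := le_lt_trans (mulr_ge0 c_ge0 Q_ge0) cQ_lt_u1.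
have Q_gt0 : 0 < Q.
  rewrite lt_def Q_ge0 andbT; apply/eqP => Q0; move: (dbl 1%N) cQ_lt_u1.
  by rewrite Q0 !mulr0; nra.
have c_gt0 : 0 < c.
  rewrite lt_def c_ge0 andbT; apply/eqP => c0; move: (grow 1%N) cQ_lt_u1.
  by rewrite c0 expr1 !(mulr0, mul0r); lra.
have pow2 n : u 1%N ^+ (2 ^ n) * Q <= u (2 ^ n)%N * Q ^+ (2 ^ n).
  elim: n => [|n IHn]; first by rewrite expn0 !expr1.
  have lhs_ge0 := mulr_ge0 (exprn_ge0 (2 ^ n) (ltW u1_gt0)) Q_ge0.
  have := lerXn2r 2 lhs_ge0 (le_trans lhs_ge0 IHn) IHn; rewrite !exprMn => sq.
  have := dbl (2 ^ n)%N; rewrite -mul2n mulnC => dbl_n.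
  rewrite expnSr !exprM -(ler_pM2r Q_gt0); nra.
(* Hence [r ^+ (2 ^ n) * Q <= C] for all [n], where [r := u 1 / (c * Q) > 1]. *)
set r := u 1%N / (c * Q).
have r_gt1 : 1 < r by rewrite ltr_pdivlMr ?mulr_gt0 ?mul1r.
have [n C_lt_rn] := exprn_unbounded r (C / Q) r_gt1.
have rn_le : r ^+ n <= r ^+ (2 ^ n) :=
  ler_weXn2l (ltW r_gt1) (ltnW (ltn_expl n (ltnSn 1))).
have u1E : u 1%N = r * (c * Q) by rewrite divfK ?gt_eqF ?mulr_gt0.
have := le_trans (pow2 n) (ler_wpM2r (exprn_ge0 _ Q_ge0) (grow (2 ^ n)%N)).
clearbody r; rewrite u1E.
set m := (2 ^ n)%N; rewrite !exprMn.
have cm_gt0 : 0 < c ^+ m * Q ^+ m by rewrite mulr_gt0 ?exprn_gt0.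
have : C < r ^+ m * Q by rewrite -ltr_pdivrMr //; exact: lt_le_trans C_lt_rn rn_le.
nra.
Qed.

Section SupInf.
Variable R : realType.
Implicit Type E : set R.

Lemma sup_ge0 E : (forall x, E x -> 0 <= x) -> 0 <= sup E.
Proof.
move=> E_ge0; have [[[x Ex] E_ub]|/sup_out ->] := pselect (has_sup E); last by [].
exact: le_trans (E_ge0 x Ex) (ub_le_sup E_ub Ex).
Qed.

(* [sup set0 = inf set0 = 0]: hence the hypotheses [0 <= b] below. *)
Lemma sup_le_ub E b : 0 <= b -> (forall x, E x -> x <= b) -> sup E <= b.
Proof.
move=> b_ge0 Eb; have [->|/set0P E_neq0] := eqVneq E set0; first by rewrite sup0.
exact: ge_sup.
Qed.

Lemma inf_ge0 E : (forall x, E x -> 0 <= x) -> 0 <= inf E.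
Proof.
move=> E_ge0; have [->|/set0P E_neq0] := eqVneq E set0; first by rewrite inf0.
exact: lb_le_inf.
Qed.

Lemma inf_le_ub E b :
  0 <= b -> (forall x, E x -> 0 <= x <= b) -> inf E <= b.
Proof.
move=> b_ge0 Eb; have [->|/set0P [x Ex]] := eqVneq E set0; first by rewrite inf0.
have /andP[_ xb] := Eb x Ex; apply: le_trans xb.
by apply: ge_inf Ex; exists 0 => y /Eb /andP[].
Qed.

End SupInf.

Lemma normc_ge0 {R : rcfType} (w : R[i]) : 0 <= Normc.normc w.
Proof. by case: w => a b; exact: sqrtr_ge0. Qed.

Lemma normc_real {R : rcfType} (r : R) : Normc.normc r%:C = `|r|.
Proof. by rewrite /= expr0n addr0 sqrtr_sqr. Qed.

Lemma normc_sqr_Re {R : rcfType} (w : R[i]) :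
  complex.Re (conjc w * w) = Normc.normc w ^+ 2.
Proof. by case: w => a b /=; rewrite sqr_sqrtr; [ring | nra]. Qed.

Section SemiInnerProduct.
Context {R : realType} {H : lmodType R[i]}.
Variable f : H -> H -> R[i].

Definition semi_inner_product : Prop :=
  [/\ forall (a : R[i]) (x y z : H), f (a *: x + y) z = a * f x z + f y z,
      forall x y : H, f x y = conjc (f y x) &
      forall x : H, 0 <= f x x].

Definition form_norm (x : H) : R := Num.sqrt (complex.Re (f x x)).

End SemiInnerProduct.

Section SemiInnerProductTheory.
Context {R : realType} {H : lmodType R[i]} {f : H -> H -> R[i]}.
Hypothesis f_semi : semi_inner_product f.
Local Notation form_norm := (form_norm f).

Lemma formDl x y z : f (x + y) z = f x z + f y z.
Proof. by case: f_semi => lin _ _; have := lin 1 x y z; rewrite scale1r mul1r. Qed.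

Lemma form0l z : f 0 z = 0.
Proof. by apply: (addrI (f 0 z)); rewrite -formDl !addr0. Qed.

Lemma formZl a x z : f (a *: x) z = a * f x z.
Proof. by case: f_semi => lin _ _; rewrite -[a *: x]addr0 lin form0l addr0. Qed.

Lemma form_conj x y : f x y = conjc (f y x).
Proof. by case: f_semi. Qed.

Lemma formDr x y z : f z (x + y) = f z x + f z y.
Proof. by rewrite [LHS]form_conj formDl rmorphD /= -!form_conj. Qed.

Lemma formZr a x z : f z (a *: x) = conjc a * f z x.
Proof. by rewrite [LHS]form_conj formZl rmorphM /= -form_conj. Qed.

Lemma Re_form_sym x y : complex.Re (f x y) = complex.Re (f y x).
Proof. by rewrite form_conj; case: (f y x). Qed.

Lemma form_ge0 x : 0 <= f x x.
Proof. by case: f_semi. Qed.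

Lemma form_real x : f x x = (complex.Re (f x x))%:C.
Proof.
move: (form_ge0 x); rewrite lecE => /andP[/eqP Im0 _].
by case: (f x x) Im0 => a b /= ->.
Qed.

Lemma Re_form_ge0 x : 0 <= complex.Re (f x x).
Proof. by move: (form_ge0 x); rewrite lecE => /andP[]. Qed.

Lemma form_norm_ge0 x : 0 <= form_norm x.
Proof. exact: sqrtr_ge0. Qed.

Lemma form_norm_sqr x : form_norm x ^+ 2 = complex.Re (f x x).
Proof. by rewrite sqr_sqrtr ?Re_form_ge0. Qed.

Lemma form_normZ a x : form_norm (a *: x) = Normc.normc a * form_norm x.
Proof.
rewrite /form_norm formZl formZr [f x x]form_real /=.
have := Re_form_ge0 x; case: a => a b /= r_ge0.
by rewrite -sqrtrM; [congr Num.sqrt; ring | nra].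
Qed.

Lemma Re_form_le x y : complex.Re (f x y) <= form_norm x * form_norm y.
Proof.
have quad s t : 0 <= s ^+ 2 * complex.Re (f x x) + 2 * s * t * complex.Re (f x y)
                     + t ^+ 2 * complex.Re (f y y).
  have := Re_form_ge0 (s%:C *: x + t%:C *: y).
  rewrite !(formDl, formDr, formZl, formZr) !conjc_real [f y x]form_conj.
  by case: (f x x) (f x y) (f y y) => ? ? [? ?] [? ?] /=; lra.
have [|Re_gt0] := lerP (complex.Re (f x y)) 0.
  by move/le_trans; apply; rewrite mulr_ge0 ?form_norm_ge0.
rewrite -ler_sqr ?nnegrE ?mulr_ge0 ?form_norm_ge0 ?(ltW Re_gt0) // exprMn !form_norm_sqr.
exact: psd_quadratic_discr.
Qed.

(* Apply the real-part version to [conjc (f x y) *: x] and [y]. *)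
Lemma normc_form_le x y : Normc.normc (f x y) <= form_norm x * form_norm y.
Proof.
have := Re_form_le (conjc (f x y) *: x) y.
rewrite formZl normc_sqr_Re form_normZ -mulrA expr2.
have -> : Normc.normc (conjc (f x y)) = Normc.normc (f x y).
  by case: (f x y) => a b /=; rewrite sqrrN.
have [->|n_neq0] := eqVneq (Normc.normc (f x y)) 0.
  by rewrite mulr_ge0 ?form_norm_ge0.
by rewrite ler_pM2l // lt_def n_neq0 normc_ge0.
Qed.

End SemiInnerProductTheory.

Lemma is_inner_product_semi {R : realType} {H : lmodType R[i]} {ip : H -> H -> R[i]} :
  is_inner_product ip -> semi_inner_product ip.
Proof. by case. Qed.

Section BoundedOperator.
Context {R : realType} {H : lmodType R[i]} {ip : H -> H -> R[i]}.

Section Linearity.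
Context {T : H -> H}.
Hypothesis T_bd : bounded_op ip T.

Lemma bounded_opD x y : T (x + y) = T x + T y.
Proof. by have := T_bd.1 1 x y; rewrite !scale1r. Qed.

Lemma bounded_op0 : T 0 = 0.
Proof. by apply: (addrI (T 0)); rewrite -bounded_opD !addr0. Qed.

Lemma bounded_opZ a x : T (a *: x) = a *: T x.
Proof. by have := T_bd.1 a x 0; rewrite !addr0 bounded_op0 addr0. Qed.

Lemma bounded_opB x y : T (x - y) = T x - T y.
Proof. by rewrite bounded_opD -scaleN1r bounded_opZ scaleN1r. Qed.

Lemma bounded_op_bound :
  exists2 c, 0 <= c & forall x, hnorm ip (T x) <= c * hnorm ip x.
Proof.
case: T_bd => _ [c Tc]; exists `|c|; first exact: normr_ge0.
by move=> x; apply: le_trans (Tc x) (ler_wpM2r (sqrtr_ge0 _) (ler_norm c)).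
Qed.

End Linearity.

Lemma bounded_op_comp {T U : H -> H} :
  bounded_op ip T -> bounded_op ip U -> bounded_op ip (T \o U).
Proof.
move=> T_bd U_bd; split=> [a x y|] /=; first by rewrite U_bd.1 T_bd.1.
have [c c_ge0 Tc] := bounded_op_bound T_bd; have [d d_ge0 Ud] := bounded_op_bound U_bd.
by exists (c * d) => x; rewrite -mulrA; apply: le_trans (Tc _) (ler_wpM2l c_ge0 (Ud x)).
Qed.

Lemma hnorm_iter_le {T : H -> H} {c : R} k x :
  0 <= c -> (forall y, hnorm ip (T y) <= c * hnorm ip y) ->
  hnorm ip (iter k T x) <= c ^+ k * hnorm ip x.
Proof.
move=> c_ge0 Tc; elim: k => [|k IHk]; first by rewrite mul1r.
by rewrite iterS exprS -mulrA; apply: le_trans (Tc _) (ler_wpM2l c_ge0 IHk).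
Qed.

End BoundedOperator.

Definition A_bounded_by {R : realType} {H : lmodType R[i]} (ip : H -> H -> R[i])
    (A T : H -> H) (N : R) : Prop :=
  forall x : H, A_norm ip A (T x) <= N * A_norm ip A x.

Lemma A_bounded_by_comp {R : realType} {H : lmodType R[i]} {ip : H -> H -> R[i]}
    {A T U : H -> H} {N P : R} :
  0 <= N -> A_bounded_by ip A T N -> A_bounded_by ip A U P ->
  A_bounded_by ip A (T \o U) (N * P).
Proof.
by move=> N_ge0 TN UP x; rewrite -mulrA; apply: le_trans (TN _) (ler_wpM2l N_ge0 (UP x)).
Qed.

Section PositiveOperator.
Context {R : realType} {H : lmodType R[i]} {ip : H -> H -> R[i]} {A : H -> H}.
Hypotheses (ip_inner : is_inner_product ip) (A_pos : positive_op ip A).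

Let ip_semi := is_inner_product_semi ip_inner.

(* Hermitian symmetry of [<A x, y>] comes from [Im <A z, z> = 0] by polarization at
   [z = x + y] and [z = x + 'i y]. *)
Lemma A_ip_semi_inner_product : semi_inner_product (A_ip ip A).
Proof.
have A_bd := A_pos.1.
have Im_A z : complex.Im (ip (A z) z) = 0.
  by move: (A_pos.2 z); rewrite lecE => /andP[/eqP].
split; rewrite /A_ip.
- move=> a x y z; rewrite (bounded_opD A_bd) (bounded_opZ A_bd).
  by rewrite (formDl ip_semi) (formZl ip_semi).
- move=> x y; have := Im_A (x + y); have := Im_A (x + 'i *: y).
  rewrite !(bounded_opD A_bd, bounded_opZ A_bd).
  rewrite !(formDl ip_semi, formDr ip_semi, formZl ip_semi, formZr ip_semi).
  move: (Im_A x) (Im_A y).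
  case: (ip (A x) x) (ip (A x) y) (ip (A y) x) (ip (A y) y) => ? ? [? ?] [? ?] [? ?] /=.
  by move=> *; congr Complex; lra.
- exact: A_pos.2.
Qed.

Lemma A_norm_sqr x : A_norm ip A x ^+ 2 = complex.Re (A_ip ip A x x).
Proof. exact: form_norm_sqr A_ip_semi_inner_product x. Qed.

Lemma Re_A_ip_le x y : complex.Re (A_ip ip A x y) <= A_norm ip A x * A_norm ip A y.
Proof. exact: Re_form_le A_ip_semi_inner_product x y. Qed.

Lemma A_norm_le_hnorm :
  exists2 a, 0 <= a & forall x, A_norm ip A x <= a * hnorm ip x.
Proof.
have [a a_ge0 Aa] := bounded_op_bound A_pos.1.
exists (Num.sqrt a) => [|x]; first exact: sqrtr_ge0.
rewrite -ler_sqr ?nnegrE ?mulr_ge0 ?sqrtr_ge0 // exprMn A_norm_sqr sqr_sqrtr //.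
apply: le_trans (Re_form_le ip_semi (A x) x) _.
by rewrite [_ ^+ 2]expr2 mulrA; apply: ler_wpM2r (sqrtr_ge0 _) _ _ (Aa x).
Qed.

Lemma eq_A_norm x y : A x = A y -> A_norm ip A x = A_norm ip A y.
Proof.
move=> Axy; rewrite /A_norm /A_ip Axy.
by rewrite -[ip (A y) x]/(A_ip ip A y x) (Re_form_sym A_ip_semi_inner_product) /A_ip Axy.
Qed.

(* [MPinv ip A (A y)] is a solution [x] of the normal equations, which forces
   [A x = A y], or the default value [0] when there is none. *)
Lemma A_norm_MPinv_le y : A_norm ip A (MPinv ip A (A y)) <= A_norm ip A y.
Proof.
rewrite /MPinv; case: xgetP => [x _ [_ orth] | _]; last first.
  by rewrite {1}/A_norm /A_ip (bounded_op0 A_pos.1) (form0l ip_semi) sqrtr0 sqrtr_ge0.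
have := orth (y - x); rewrite (bounded_opB A_pos.1).
case: ip_inner => _ _ _ definite /definite /eqP; rewrite subr_eq0 => /eqP Ayx.
by rewrite (eq_A_norm _ _ Ayx).
Qed.

Lemma A_normZ a x : A_norm ip A (a *: x) = Normc.normc a * A_norm ip A x.
Proof. exact: form_normZ A_ip_semi_inner_product a x. Qed.

Lemma A_opnorm_ge0 T : 0 <= A_opnorm ip A T.
Proof. by apply: sup_ge0 => _ [z _ <-]; exact: sqrtr_ge0. Qed.

Lemma A_bounded_by_A_opnorm {T : H -> H} {K : R} :
  bounded_op ip T -> A_bounded_by ip A T K -> A_bounded_by ip A T (A_opnorm ip A T).
Proof.
move=> T_bd TK x; have nx_ge0 : 0 <= A_norm ip A x := sqrtr_ge0 _.
have [nx0|nx_neq0] := eqVneq (A_norm ip A x) 0.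
  by move: (TK x); rewrite nx0 !mulr0.
have nx_gt0 : 0 < A_norm ip A x by rewrite lt_def nx_neq0.
pose z := (A_norm ip A x)^-1%:C *: x.
have z_unit : A_sphere ip A z.
  by rewrite /A_sphere /= A_normZ normc_real ger0_norm ?invr_ge0 ?nx_ge0 // mulVf.
have : A_norm ip A (T z) <= A_opnorm ip A T.
  apply: ub_le_sup; last by exists z.
  by exists K => _ [y y_unit <-]; move: (TK y); rewrite y_unit mulr1.
rewrite (bounded_opZ T_bd) A_normZ normc_real ger0_norm ?invr_ge0 //.
by rewrite mulrC ler_pdivrMr.
Qed.

Section AUnitSphere.
Context {T : H -> H} {N : R}.
Hypotheses (N_ge0 : 0 <= N) (TN : A_bounded_by ip A T N).

Lemma A_norm_sphere_le z : A_sphere ip A z -> A_norm ip A (T z) <= N.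
Proof. by move=> z_unit; move: (TN z); rewrite z_unit mulr1. Qed.

Lemma normc_A_ip_sphere_le z : A_sphere ip A z -> Normc.normc (A_ip ip A (T z) z) <= N.
Proof.
move=> z_unit; apply: le_trans (normc_form_le A_ip_semi_inner_product _ _) _.
by rewrite [X in _ * X]z_unit mulr1; exact: A_norm_sphere_le.
Qed.

Lemma A_davis_wielandt_radius_sqr_le :
  A_davis_wielandt_radius ip A T ^+ 2 <= N ^+ 4 + N ^+ 2.
Proof.
have bound_ge0 : 0 <= N ^+ 4 + N ^+ 2 by rewrite addr_ge0 ?exprn_ge0.
rewrite -(sqr_sqrtr bound_ge0) ler_pXn2r ?nnegrE ?sqrtr_ge0 //; last first.
  by apply: sup_ge0 => _ [z _ <-]; exact: sqrtr_ge0.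
apply: sup_le_ub (sqrtr_ge0 _) _ => _ [z z_unit <-]; apply: ler_wsqrtr.
rewrite addrC; apply: lerD; apply: lerXn2r; rewrite ?nnegrE //.
- exact: sqrtr_ge0.
- exact: A_norm_sphere_le.
- exact: normc_ge0.
- exact: normc_A_ip_sphere_le.
Qed.

Lemma A_crawford_ge0_le : 0 <= A_crawford ip A T <= N.
Proof.
apply/andP; split; first by apply: inf_ge0 => _ [z _ <-]; exact: normc_ge0.
apply: inf_le_ub N_ge0 _ => _ [z z_unit <-].
by rewrite normc_ge0 (normc_A_ip_sphere_le _ z_unit).
Qed.

End AUnitSphere.

Section ASelfadjoint.
Context {T : H -> H}.
Hypotheses (T_bd : bounded_op ip T)
  (T_sa : forall u v, A_ip ip A (T u) v = A_ip ip A u (T v)).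

Lemma iter_A_selfadjoint k u v : A_ip ip A (iter k T u) v = A_ip ip A u (iter k T v).
Proof. by elim: k u v => [//|k IHk] u v; rewrite iterS T_sa IHk iterSr. Qed.

Lemma A_norm_iter_sqr_le k x :
  A_norm ip A (iter k T x) ^+ 2 <= A_norm ip A (iter k.*2 T x) * A_norm ip A x.
Proof.
rewrite A_norm_sqr -iter_A_selfadjoint -iterD addnn.
exact: Re_A_ip_le _ _.
Qed.

(* An A-selfadjoint bounded operator is A-bounded, with [||T||_A <= ||T||]: the
   A-norms of [T^k x] are log-convex along doublings of [k] yet grow at most like
   [||T||^k], which leaves no room for [||T x||_A > ||T|| ||x||_A]. *)
Lemma A_selfadjoint_A_bounded : exists2 c, 0 <= c & A_bounded_by ip A T c.
Proof.
have [a a_ge0 Aa] := A_norm_le_hnorm; have [c c_ge0 Tc] := bounded_op_bound T_bd.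
exists c => // x.
apply: (doubling_growth_le (fun k => A_norm ip A (iter k T x)) _ c (a * hnorm ip x)).
- exact: sqrtr_ge0.
- exact: c_ge0.
- by move=> k; exact (A_norm_iter_sqr_le k x).
- move=> k; apply: le_trans (Aa _) _; rewrite -mulrA [_ * c ^+ k]mulrC.
  by apply: ler_wpM2l a_ge0 _ _ (hnorm_iter_le k x c_ge0 Tc).
Qed.

End ASelfadjoint.

Section AdjointSolution.
Context {S Sstar Rop : H -> H}.
Hypotheses (S_adj : is_adjoint ip S Sstar) (S_bd : bounded_op ip S).
Hypothesis ARop : forall x, A (Rop x) = Sstar (A x).

Lemma A_ip_Rop u v : A_ip ip A (Rop u) v = A_ip ip A u (S v).
Proof. by rewrite /A_ip ARop (form_conj ip_semi) -S_adj -(form_conj ip_semi). Qed.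

Lemma RopS_A_selfadjoint u v :
  A_ip ip A (Rop (S u)) v = A_ip ip A u (Rop (S v)).
Proof.
rewrite A_ip_Rop [RHS](form_conj A_ip_semi_inner_product) A_ip_Rop.
exact: form_conj A_ip_semi_inner_product _ _.
Qed.

Lemma in_BA_A_bounded :
  bounded_op ip Rop -> exists2 K, 0 <= K & A_bounded_by ip A S K.
Proof.
move=> Rop_bd.
have [c c_ge0 RSc] :=
  A_selfadjoint_A_bounded (bounded_op_comp Rop_bd S_bd) RopS_A_selfadjoint.
exists (Num.sqrt c) => [|x]; first exact: sqrtr_ge0.
rewrite -ler_sqr ?nnegrE ?mulr_ge0 ?sqrtr_ge0 // exprMn A_norm_sqr sqr_sqrtr //.
rewrite -A_ip_Rop; apply: le_trans (Re_A_ip_le _ _) _.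
by rewrite [_ ^+ 2]expr2 mulrA; apply: ler_wpM2r (sqrtr_ge0 _) _ _ (RSc x).
Qed.

Context {M : R}.
Hypotheses (M_ge0 : 0 <= M) (SM : A_bounded_by ip A S M).

Lemma A_bounded_by_Rop : A_bounded_by ip A Rop M.
Proof.
move=> w; have w_ge0 : 0 <= A_norm ip A w := sqrtr_ge0 _.
have [->|Rw_neq0] := eqVneq (A_norm ip A (Rop w)) 0; first exact: mulr_ge0.
have Rw_gt0 : 0 < A_norm ip A (Rop w) by rewrite lt_def Rw_neq0 sqrtr_ge0.
have : A_norm ip A (Rop w) ^+ 2 <= A_norm ip A w * (M * A_norm ip A (Rop w)).
  rewrite A_norm_sqr A_ip_Rop; apply: le_trans (Re_A_ip_le _ _) _.
  by apply: ler_wpM2l w_ge0 _ _ (SM _).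
nra.
Qed.

Lemma A_bounded_by_A_sharp : A_bounded_by ip A (A_sharp ip A Sstar) M.
Proof.
move=> w; rewrite /A_sharp -ARop.
exact: le_trans (A_norm_MPinv_le _) (A_bounded_by_Rop w).
Qed.

End AdjointSolution.

End PositiveOperator.

Theorem theorem2p11 (R : realType) (H : lmodType R[i]) (ip : H -> H -> R[i])
  (A S Sstar : H -> H) :
  is_complex_Hilbert ip ->
  positive_op ip A ->
  is_adjoint ip S Sstar ->
  in_BA ip A S Sstar ->
  A_davis_wielandt_radius ip A S ^+ 2 <=
    A_opnorm ip A S ^+ 4 + 2 * A_opnorm ip A S ^+ 2
    - Num.sqrt (A_crawford ip A (A_sharp ip A Sstar \o S)
                * A_crawford ip A (S \o A_sharp ip A Sstar)).
Proof.
move=> [ip_inner _] A_pos S_adj [S_bd [Rop [Rop_bd ARop]]].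
have [K _ SK] := in_BA_A_bounded ip_inner A_pos S_adj S_bd ARop Rop_bd.
set M := A_opnorm ip A S.
have M_ge0 : 0 <= M := A_opnorm_ge0 S.
have SM : A_bounded_by ip A S M := A_bounded_by_A_opnorm ip_inner A_pos S_bd SK.
have SsharpM := A_bounded_by_A_sharp ip_inner A_pos S_adj ARop M_ge0 SM.
have MM_ge0 := mulr_ge0 M_ge0 M_ge0.
have /andP[c1_ge0 c1_le] :=
  A_crawford_ge0_le ip_inner A_pos MM_ge0 (A_bounded_by_comp M_ge0 SsharpM SM).
have /andP[c2_ge0 c2_le] :=
  A_crawford_ge0_le ip_inner A_pos MM_ge0 (A_bounded_by_comp M_ge0 SM SsharpM).
have sqrt_le : Num.sqrt (A_crawford ip A (A_sharp ip A Sstar \o S)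
                         * A_crawford ip A (S \o A_sharp ip A Sstar)) <= M * M.
  rewrite -(ger0_norm MM_ge0) -sqrtr_sqr; apply: ler_wsqrtr.
  by rewrite expr2 ler_pM.
have := A_davis_wielandt_radius_sqr_le ip_inner A_pos M_ge0 SM.
have := expr2 M; lra.
Qed.
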